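(* Let $\mathcal G=(V,E,r)$ be a graph. If $a\in\mathbf A(\mathcal G)$ and $\operatorname{supp}(a)$ is acyclic, then $\mathsf L(a)=\{l\}$ with $l=\sum_{v\in V}a(v)-\sum_{e\in E}a(e)$. In particular $|\mathsf L(a)|=1$.
   Context: A graph $\mathcal G=(V,E,r)$ consists of a finite vertex set $V$, a finite edge set $E$ disjoint from $V$, and a map $r$ assigning to each edge a two-element subset of $V$; multiple edges allowed, no loops. Acyclic means containing no cycle, where two edges with the same pair of endpoints form a cycle of length $2$. An agglomeration on $\mathcal G$ is a function $a\colon V\cup E\to\mathbb N_0$ with $a(v)\ge a(e)$ whenever $v$ is incident with $e$; $\mathbf A(\mathcal G)$ is the monoid of agglomerations under pointwise addition. $\operatorname{supp}(a)$ is the subgraph of vertices and edges where $a$ is positive. $\mathsf L(a)$ is the set of $n\in\mathbb N_0$ such that $a$ is a sum of $n$ atoms (nonzero elements not expressible as a sum of two nonzero elements), with $\mathsf L(0)=\{0\}$. *)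

From mathcomp Require Import all_boot all_order all_algebra.
Set Implicit Arguments. Unset Strict Implicit. Unset Printing Implicit Defensive.

(* A graph G = (V, E, r): V, E finite types (disjoint since they are distinct
   types), r e a two-element subset of V (multiple edges allowed, no loops).
   The hypothesis  forall e, #|r e| = 2  is carried in the theorem. *)

Section Graphs.
Variables (V E : finType) (r : E -> {set V}).

(* functions V ∪ E -> N0, encoded on the disjoint sum V + E *)
Definition vefun := {ffun V + E -> nat}.

Definition is_agg (a : vefun) : Prop :=
  forall (v : V) (e : E), v \in r e -> a (inr e) <= a (inl v).

Definition agg0 : vefun := [ffun _ => 0].
Definition agg_add (b c : vefun) : vefun := [ffun x => b x + c x].

Definition is_atom (a : vefun) : Prop :=
  is_agg a /\ a <> agg0 /\
  ~ (exists b c : vefun, [/\ is_agg b, is_agg c, b <> agg0, c <> agg0 &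
                             a = agg_add b c]).

Definition agg_sum (s : seq vefun) : vefun := [ffun x => \sum_(b <- s) b x].

Definition lengths (a : vefun) : nat -> Prop :=
  fun n => exists s : seq vefun,
    [/\ size s = n, (forall b, b \in s -> is_atom b) & a = agg_sum s].

(* a cycle of length k+2 >= 2 in the subgraph with vertex predicate Q and edge
   predicate P: distinct vertices v_0..v_{k+1}, distinct edges e_0..e_{k+1},
   with e_i joining v_i and v_{i+1 mod (k+2)}.  For length 2 this is two
   distinct edges with the same pair of endpoints. *)
Definition has_cycle (Q : pred V) (P : pred E) : Prop :=
  exists (k : nat) (vs : 'I_k.+2 -> V) (es : 'I_k.+2 -> E),
    [/\ injective vs, injective es, (forall i, Q (vs i)), (forall i, P (es i)) &
        forall i, r (es i) = [set vs i; vs (ordS i)]].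

Definition supp_acyclic (a : vefun) : Prop :=
  ~ has_cycle (fun v => 0 < a (inl v)) (fun e => 0 < a (inr e)).
End Graphs.

From mathcomp Require Import all_boot all_order all_algebra.
From mathcomp Require Import zify.
From Stdlib Require Import Classical.
Set Implicit Arguments. Unset Strict Implicit. Unset Printing Implicit Defensive.

(* An atom b of A(G) whose support is acyclic is the indicator function of its
   support, since otherwise b = [b > 0] + (b - [b > 0]) splits it, and its
   support is connected, since otherwise restricting b to one component splits
   it.  So supp b is a tree, and a tree has one more vertex than edges: deleting
   an edge of a forest separates its endpoints, so it adds exactly one
   component.  Hence chi(b) = sum_v b(v) - sum_e b(e) = 1 for such an atom; chi
   is additive and every summand of a has acyclic support, so every
   factorisation of a into atoms has exactly chi(a) factors, and one exists by
   induction on the total mass. *)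

Lemma ordS_small n (i : 'I_n.+1) : i < n -> ordS i = i.+1 :> nat.
Proof. by move=> lt_in; rewrite /= modn_small. Qed.

Lemma ordS_max n : ordS (@ord_max n) = ord0.
Proof. by apply: val_inj; rewrite /= modnn. Qed.

Lemma ordS_neq n (i : 'I_n.+2) : ordS i != i.
Proof.
have [/ordS_small Si | le_ni] := ltnP i n.+1.
  by apply/eqP => /(f_equal (@nat_of_ord _)); rewrite Si; lia.
have -> : i = ord_max by apply: val_inj; have := ltn_ord i; rewrite /=; lia.
by rewrite ordS_max -val_eqE.
Qed.

Lemma eq_set2_cards2 (T : finType) (A : {set T}) x y :
  #|A| = 2 -> x \in A -> y \in A -> x != y -> A = [set x; y].
Proof.
move=> cA xA yA nxy; apply/eqP; rewrite eq_sym eqEcard cards2 nxy cA leqnn andbT.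
by apply/subsetP => z /set2P[]->.
Qed.

Lemma cards2_set2 (T : finType) (A : {set T}) x :
  #|A| = 2 -> x \in A -> exists2 y, y != x & A = [set x; y].
Proof.
move=> cA xA; have /cards1P[y Ay] : #|A :\ x| == 1.
  by move: cA; rewrite (cardsD1 x) xA; lia.
have : y \in A :\ x by rewrite Ay set11.
by rewrite in_setD1 => /andP[nyx _]; exists y; rewrite // -Ay setD1K.
Qed.

Section Graph.
Variables (V E : finType) (r : E -> {set V}).
Hypothesis card_r : forall e, #|r e| = 2.
Implicit Types (F : {set E}) (S T : {set V}) (a b c : vefun V E)
  (s : seq (vefun V E)).

Definition adj (F : {set E}) : rel V :=
  fun v w => [exists f in F, (v \in r f) && (w \in r f)].

Lemma adj_sym F : symmetric (adj F).
Proof.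
by move=> v w; apply/existsP/existsP => -[f /and3P[fF vf wf]]; exists f; rewrite fF vf wf.
Qed.

Lemma connect_adj_sym F : connect_sym (adj F).
Proof. exact/sym_connect_sym/adj_sym. Qed.

Lemma connect_adj_subset (F1 F2 : {set E}) u v :
  F1 \subset F2 -> connect (adj F1) u v -> connect (adj F2) u v.
Proof.
move=> sF12; apply: connect_sub => x y /existsP[f /andP[fF xyf]].
by apply: connect1; apply/existsP; exists f; rewrite (subsetP sF12).
Qed.

Lemma connect_adjD1 F e w u :
  connect (adj F) w u ->
  connect (adj (F :\ e)) w u \/ exists2 z, z \in r e & connect (adj (F :\ e)) w z.
Proof.
move/connectP=> [p pth ->{u}]; elim: p w pth => [|w' p IH] w /=; first by left.
case/andP=> /existsP[f /and3P[fF wf w'f]] /IH {}IH.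
have [fe | nfe] := eqVneq f e; first by right; exists w; rewrite -?fe.
have ww' : connect (adj (F :\ e)) w w'.
  by apply: connect1; apply/existsP; exists f; rewrite !inE nfe fF wf w'f.
by case: IH => [c | [z ze c]]; [left | right; exists z]; rewrite // (connect_trans ww').
Qed.

Definition forest (F : {set E}) := ~ has_cycle r (fun _ => true) (fun f => f \in F).

Lemma forest_subset (F1 F2 : {set E}) : F1 \subset F2 -> forest F2 -> forest F1.
Proof.
move=> sF12 fF2 [k [vs [es [vs_inj es_inj _ esF res]]]]; apply: fF2.
by exists k, vs, es; split=> // i; apply: (subsetP sF12).
Qed.

Lemma path_cycle F e x p :
  e \notin F -> x \in r e -> last x p \in r e -> x != last x p ->
  path (adj F) x p -> uniq (x :: p) ->
  has_cycle r (fun _ => true) (fun f => f \in e |: F).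
Proof.
move=> eNF xe; case: p => [|x1 p]; first by rewrite /= eqxx.
set k := size p => ye nxy pth uq.
pose vs (i : 'I_k.+2) := nth x [:: x, x1 & p] i.
pose link v w := odflt e [pick f in F | (v \in r f) && (w \in r f)].
(* The i-th edge joins vs i to vs (ordS i); the last one is e, which closes the path. *)
pose es (i : 'I_k.+2) := if i < k.+1 then link (vs i) (vs (ordS i)) else e.
have vs_inj : injective vs by move=> i j /eqP; rewrite nth_uniq // => /eqP/val_inj.
have vs_max : vs ord_max = last x (x1 :: p).
  by rewrite /vs /= -[k]/(size (x1 :: p)).-1 nth_last.
have linkP v w : adj F v w -> [/\ link v w \in F, v \in r (link v w) & w \in r (link v w)].
  case/existsP=> f /andP[fF vwf]; rewrite /link.
  by case: pickP => [g /and3P[] // | /(_ f)]; rewrite fF vwf.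
have es_F (i : 'I_k.+2) : i < k.+1 -> es i \in F.
  move=> lt_ik; rewrite /es lt_ik; case: (linkP (vs i) (vs (ordS i))) => //.
  by rewrite /vs ordS_small //; apply: (pathP x pth).
have es_ends (i : 'I_k.+2) : vs i \in r (es i) /\ vs (ordS i) \in r (es i).
  have [lt_ik | le_ki] := ltnP i k.+1.
    case: (linkP (vs i) (vs (ordS i))) => [|_ vi wi]; last by rewrite /es lt_ik.
    by rewrite /vs ordS_small //; apply: (pathP x pth).
  have -> : i = ord_max by apply: val_inj; have := ltn_ord i; rewrite /=; lia.
  by rewrite /es ltnn ordS_max vs_max.
have r_es (i : 'I_k.+2) : r (es i) = [set vs i; vs (ordS i)].
  case: (es_ends i) => vi wi; apply: eq_set2_cards2 => //.
  by rewrite (inj_eq vs_inj) eq_sym ordS_neq.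
have es_succ (i j : 'I_k.+2) : es i = es j -> i = j \/ i = ordS j.
  by move=> eij; have := (es_ends i).1; rewrite eij r_es => /set2P[]/vs_inj; [left | right].
(* Equal edges at i != j force i = ordS j and j = ordS i, impossible on the path
   part; and e is not an edge of F. *)
exists k, vs, es; split=> // [i j eij | i].
  have [lt_ik | le_ki] := ltnP i k.+1; have [lt_jk | le_kj] := ltnP j k.+1.
  - case: (es_succ _ _ eij) => // iSj; case: (es_succ _ _ (esym eij)) => // jSi.
    by move: (ordS_small lt_ik) (ordS_small lt_jk); rewrite -iSj -jSi; lia.
  - by have := es_F _ lt_ik; rewrite eij /es ltnNge le_kj /= (negbTE eNF).
  - by have := es_F _ lt_jk; rewrite -eij /es ltnNge le_ki /= (negbTE eNF).
  - by apply: val_inj; have := ltn_ord i; have := ltn_ord j; rewrite /=; lia.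
rewrite /= in_setU1; have [/es_F-> | le_ki] := ltnP i k.+1; first by rewrite orbT.
by rewrite /es ltnNge le_ki eqxx.
Qed.

Lemma forest_separates F e x y :
  forest F -> e \in F -> x \in r e -> y \in r e -> x != y ->
  ~~ connect (adj (F :\ e)) x y.
Proof.
move=> fF eF xe ye nxy; apply/negP => /connectP[p pth yE].
move: ye nxy; rewrite yE; case: (shortenP pth) => p' pth' uq _ ye nxy.
apply: fF; rewrite -(setD1K eF).
by apply: path_cycle pth' uq; rewrite ?setD11.
Qed.

Definition separated F T :=
  {in T &, forall t t', t != t' -> ~~ connect (adj F) t t'}.

Lemma separated_subset (F1 F2 : {set E}) T : F1 \subset F2 -> separated F2 T -> separated F1 T.
Proof.
move=> sF12 sepT t t' tT t'T /(sepT t t' tT t'T).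
by apply: contra; apply: connect_adj_subset.
Qed.

Lemma separated_setU1 F T z :
  separated F T -> {in T, forall t, ~~ connect (adj F) z t} -> separated F (z |: T).
Proof.
move=> sepT zT t t' /setU1P[-> | tT] /setU1P[-> | t'T]; rewrite ?eqxx //.
- by move=> _; apply: zT.
- by move=> _; rewrite connect_adj_sym; apply: zT.
- exact: sepT.
Qed.

Lemma separated_endpoint F T e x y :
  separated F T -> e \in F -> r e = [set x; y] -> ~~ connect (adj (F :\ e)) x y ->
  exists2 z, z \in r e & {in T, forall t, ~~ connect (adj (F :\ e)) z t}.
Proof.
move=> sepT eF rexy nxy.
have [/exists_inP[t0 t0T xt0] | /exists_inPn xT] :=
  boolP [exists t in T, connect (adj (F :\ e)) x t]; last by exists x; rewrite ?rexy ?set21.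
exists y; first by rewrite rexy set22.
move=> t tT; apply/negP => yt.
have [t0t | nt0t] := eqVneq t0 t.
  by move: nxy; rewrite (connect_trans xt0) // t0t connect_adj_sym.
have xy : adj F x y by apply/existsP; exists e; rewrite eF rexy set21 set22.
case/negP: (sepT _ _ t0T tT nt0t); apply: connect_trans (connect_trans (connect1 xy) _).
- by rewrite connect_adj_sym; apply: connect_adj_subset xt0; apply: subsetDl.
- by apply: connect_adj_subset yt; apply: subsetDl.
Qed.

Definition edges_in S F := {in F, forall f, r f \subset S}.

Lemma edges_in_subset S (F1 F2 : {set E}) : F1 \subset F2 -> edges_in S F2 -> edges_in S F1.
Proof. by move=> sF12 inS f /(subsetP sF12)/inS. Qed.

Lemma card_forest_separated S F T :
  edges_in S F -> forest F -> T \subset S -> separated F T -> #|F| + #|T| <= #|S|.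
Proof.
have [n] := ubnP #|F|; elim: n F T => // n IH F T ltFn inS fF sTS sepT.
have [-> | /set0Pn[e eF]] := eqVneq F set0; first by rewrite cards0 subset_leq_card.
have /cards2P[x [y [nxy rexy]]] : #|r e| == 2 by rewrite card_r.
have xe : x \in r e by rewrite rexy set21.
have ye : y \in r e by rewrite rexy set22.
have [z ze zT] := separated_endpoint sepT eF rexy (forest_separates fF eF xe ye nxy).
have zNT : z \notin T by apply/negP => /zT; rewrite connect0.
have sFeF : F :\ e \subset F by apply: subsetDl.
have ltFe : #|F :\ e| < n by have := proper_card (properD1 eF); lia.
have zTS : z |: T \subset S by rewrite subUset sub1set (subsetP (inS e eF)).
have := IH (F :\ e) (z |: T) ltFe (edges_in_subset sFeF inS) (forest_subset sFeF fF) zTS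
  (separated_setU1 (separated_subset sFeF sepT) zT).
by rewrite cardsU1 zNT (cardsD1 e F) eF /=; lia.
Qed.

Definition meets_components F S T :=
  {in S, forall w, exists2 t, t \in T & connect (adj F) w t}.

Lemma meets_componentsD1 S F T e :
  edges_in S F -> e \in F -> meets_components F S T ->
  exists z, meets_components (F :\ e) S (z |: T).
Proof.
move=> inS eF covT.
have [x xe] : exists x, x \in r e by apply/set0Pn; rewrite -card_gt0 card_r.
have [t0 t0T xt0] := covT x (subsetP (inS e eF) x xe).
have [z0 z0e z0t0] : exists2 z0, z0 \in r e & connect (adj (F :\ e)) z0 t0.
  rewrite connect_adj_sym in xt0.
  by case: (connect_adjD1 e xt0) => [c | [z ze c]]; [exists x | exists z];
    rewrite // connect_adj_sym.
(* z0 is still linked to T without e, so only the other endpoint needs a representative. *)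
have [z1 _ rez] := cards2_set2 (card_r e) z0e.
exists z1 => w wS; have [t tT wt] := covT w wS.
case: (connect_adjD1 e wt) => [c | [z]]; first by exists t; rewrite // setU1r.
rewrite rez => /set2P[-> wz0 | -> wz1]; last by exists z1; rewrite ?setU11.
by exists t0; rewrite ?setU1r // (connect_trans wz0).
Qed.

Lemma card_meets_components S F T :
  edges_in S F -> meets_components F S T -> #|S| <= #|F| + #|T|.
Proof.
have [n] := ubnP #|F|; elim: n F T => // n IH F T ltFn inS covT.
have [F0 | /set0Pn[e eF]] := eqVneq F set0.
  rewrite F0 cards0 subset_leq_card //; apply/subsetP => w /covT[t tT].
  rewrite F0 => /connectP[[| v p] /=]; first by move=> _ <-.
  by case/andP => /exists_inP[f]; rewrite in_set0.
have [z covzT] := meets_componentsD1 inS eF covT.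
have sFeF : F :\ e \subset F by apply: subsetDl.
have ltFe : #|F :\ e| < n by have := proper_card (properD1 eF); lia.
have := IH (F :\ e) (z |: T) ltFe (edges_in_subset sFeF inS) covzT.
by rewrite cardsU1 (cardsD1 e F) eF; case: (z \notin T) => /=; lia.
Qed.

Lemma card_tree S F u :
  edges_in S F -> forest F -> u \in S -> {in S, forall w, connect (adj F) u w} ->
  #|S| = #|F| + 1.
Proof.
move=> inS fF uS conn; apply/eqP; rewrite eqn_leq -(cards1 u).
rewrite card_meets_components ?card_forest_separated ?sub1set //.
- by move=> t t' /set1P-> /set1P->; rewrite eqxx.
- by move=> w /conn uw; exists u; rewrite ?set11 // connect_adj_sym.
Qed.

Definition vsupp (a : vefun V E) := [set v | 0 < a (inl v)].
Definition esupp (a : vefun V E) := [set e | 0 < a (inr e)].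

Lemma edges_in_supp a : is_agg r a -> edges_in (vsupp a) (esupp a).
Proof.
move=> ha f; rewrite inE => af; apply/subsetP => v vf.
by rewrite inE (leq_trans af) ?ha.
Qed.

Lemma forest_supp a : is_agg r a -> supp_acyclic r a -> forest (esupp a).
Proof.
move=> ha acy [k [vs [es [vs_inj es_inj _ esF res]]]]; apply: acy.
exists k, vs, es; split=> // i; last by have := esF i; rewrite inE.
have := subsetP (edges_in_supp ha (esF i)) (vs i).
by rewrite res set21 inE; apply.
Qed.

Lemma esupp_add b c : esupp (agg_add b c) = esupp b :|: esupp c.
Proof. by apply/setP => f; rewrite !inE ffunE addn_gt0. Qed.

Lemma vsupp_neq0 a : is_agg r a -> a <> agg0 V E -> vsupp a != set0.
Proof.
move=> ha na; apply/negP => /eqP S0; apply: na.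
have a0 v : a (inl v) = 0.
  by have := in_set0 v; rewrite -S0 inE lt0n => /negbT/negPn/eqP.
apply/ffunP => -[v | e]; rewrite ffunE ?a0 //.
have [w we] : exists w, w \in r e by apply/set0Pn; rewrite -card_gt0 card_r.
by apply/eqP; rewrite -leqn0 -(a0 w) ha.
Qed.

Definition euler_char (a : vefun V E) : int :=
  ((\sum_(v : V) a (inl v))%:Z - (\sum_(e : E) a (inr e))%:Z)%R.

Lemma euler_char_add b c : euler_char (agg_add b c) = (euler_char b + euler_char c)%R.
Proof.
rewrite /euler_char /agg_add; under eq_bigr do rewrite ffunE.
under [X in (_ - X%:Z)%R]eq_bigr do rewrite ffunE.
by rewrite !big_split /= !PoszD; lia.
Qed.

Lemma euler_char_card a :
  (forall x, a x <= 1) -> euler_char a = (#|vsupp a|%:Z - #|esupp a|%:Z)%R.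
Proof.
move=> a01; rewrite /euler_char; congr (_%:Z - _%:Z)%R;
  rewrite -sum1_card [RHS]big_mkcond; apply: eq_bigr => x _; rewrite inE.
- by move: (a01 (inl x)); case: (a _) => [|[|]].
- by move: (a01 (inr x)); case: (a _) => [|[|]].
Qed.

Lemma atom_le1 b : is_atom r b -> forall x, b x <= 1.
Proof.
move=> [hb [nb nsplit]].
pose t : vefun V E := [ffun x => (0 < b x) : nat].
pose c : vefun V E := [ffun x => b x - (0 < b x)].
have ht : is_agg r t.
  move=> v e ve; rewrite !ffunE; have := hb v e ve.
  by case: (b (inr e)) => // m; case: (b (inl v)).
have hc : is_agg r c.
  by move=> v e ve; rewrite !ffunE; have := hb v e ve; lia.
have nt : t <> agg0 V E.
  move/ffunP=> t0; apply: nb; apply/ffunP => x.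
  by have := t0 x; rewrite !ffunE; case: (b x).
have [c0 | nc] := eqVneq c (agg0 V E); last first.
  case: nsplit; exists t, c; split=> //; first exact/eqP.
  by apply/ffunP => x; rewrite !ffunE subnKC //; case: (b x).
move=> x; have := congr1 (fun g : vefun V E => g x) c0.
by rewrite !ffunE; case: (b x) => [|[|]].
Qed.

Lemma atom_connected b :
  is_atom r b -> {in vsupp b &, forall u w, connect (adj (esupp b)) u w}.
Proof.
move=> [hb [_ nsplit]] u w uS wS; apply/negPn/negP => nuw; apply: nsplit.
pose C := [set v | connect (adj (esupp b)) u v].
pose inC (x : V + E) := match x with inl v => v \in C | inr f => r f \subset C end.
pose b1 : vefun V E := [ffun x => if inC x then b x else 0].
pose b2 : vefun V E := [ffun x => if inC x then 0 else b x].
exists b1, b2; split.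
- move=> v f vf; rewrite !ffunE /=; case: ifP => // /subsetP sC.
  by rewrite sC //; apply: hb.
- move=> v f vf; rewrite !ffunE /=; case: ifP => // nsC.
  case: ifP => [vC | _]; last exact: hb.
  have [-> // | bf] := posnP (b (inr f)); case/negP: nsC.
  apply/subsetP => v' v'f; move: vC; rewrite !inE => uv.
  by apply: connect_trans uv (connect1 _); apply/existsP; exists f; rewrite inE bf vf v'f.
- move/ffunP/(_ (inl u)); rewrite !ffunE /= inE connect0 => /eqP.
  by move: uS; rewrite inE lt0n => /negPf->.
- move/ffunP/(_ (inl w)); rewrite !ffunE /= inE (negbTE nuw) => /eqP.
  by move: wS; rewrite inE lt0n => /negPf->.
- by apply/ffunP => x; rewrite !ffunE; case: (inC x); rewrite ?addn0.
Qed.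

Lemma atom_euler_char b : is_atom r b -> forest (esupp b) -> euler_char b = 1%R.
Proof.
move=> atb fb; have [hb [nb _]] := atb.
have /set0Pn[u uS] := vsupp_neq0 hb nb.
have := card_tree (edges_in_supp hb) fb uS (fun w => atom_connected atb uS).
rewrite euler_char_card; last exact: atom_le1.
by move=> ->; lia.
Qed.

Lemma agg_sum_cons b s : agg_sum (b :: s) = agg_add b (agg_sum s).
Proof. by apply/ffunP => x; rewrite !ffunE big_cons. Qed.

Lemma agg_sum_cat (s1 s2 : seq (vefun V E)) :
  agg_sum (s1 ++ s2) = agg_add (agg_sum s1) (agg_sum s2).
Proof. by apply/ffunP => x; rewrite !ffunE big_cat. Qed.

Lemma euler_char_atoms s :
  (forall b, b \in s -> is_atom r b) -> forest (esupp (agg_sum s)) ->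
  euler_char (agg_sum s) = ((size s)%:Z)%R.
Proof.
elim: s => [|b s IH] ats; first by rewrite /euler_char !big1 // => x _; rewrite ffunE big_nil.
rewrite agg_sum_cons euler_char_add esupp_add => fbs.
have ats' c : c \in s -> is_atom r c by move=> cs; apply: ats; rewrite inE cs orbT.
rewrite (atom_euler_char (ats b (mem_head b s)) (forest_subset (subsetUl _ _) fbs)).
by rewrite (IH ats' (forest_subset (subsetUr _ _) fbs)) /= -add1n PoszD.
Qed.

Definition mass a := \sum_x a x.

Lemma mass_add b c : mass (agg_add b c) = mass b + mass c.
Proof. by rewrite /mass -big_split; apply: eq_bigr => x _; rewrite ffunE. Qed.

Lemma mass_gt0 a : a <> agg0 V E -> 0 < mass a.
Proof.
move=> na; rewrite lt0n; apply/negP => /eqP/eqP; rewrite sum_nat_eq0 => /forallP a0.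
by apply: na; apply/ffunP => x; rewrite ffunE; apply/eqP; apply: a0.
Qed.

Lemma agg_atomic a :
  is_agg r a -> exists2 s, (forall b, b \in s -> is_atom r b) & a = agg_sum s.
Proof.
have [m] := ubnP (mass a); elim: m a => // m IH a lt_am ha.
have [-> | na] := eqVneq a (agg0 V E).
  by exists [::] => //; apply/ffunP => x; rewrite !ffunE big_nil.
have [[b [c [hb hc nb nc aE]]] | nsplit] := classic (exists b c,
  [/\ is_agg r b, is_agg r c, b <> agg0 V E, c <> agg0 V E & a = agg_add b c]).
  move: lt_am; rewrite aE mass_add => lt_bcm.
  have lt_bm : mass b < m by have := mass_gt0 nc; lia.
  have lt_cm : mass c < m by have := mass_gt0 nb; lia.
  have [sb atb ->] := IH b lt_bm hb.
  have [sc atc ->] := IH c lt_cm hc.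
  exists (sb ++ sc); last by rewrite agg_sum_cat.
  by move=> d; rewrite mem_cat => /orP[/atb | /atc].
exists [:: a]; last by apply/ffunP => x; rewrite !ffunE big_seq1.
by move=> b /[1!inE] /eqP->; split; last split; [| apply/eqP |].
Qed.

End Graph.

Theorem lemma4p18 (V E : finType) (r : E -> {set V})
  (hr : forall e : E, #|r e| = 2) (a : vefun V E) :
  is_agg r a -> supp_acyclic r a ->
  forall n : nat, lengths r a n <->
    (n%:Z = (\sum_(v : V) a (inl v))%:Z - (\sum_(e : E) a (inr e))%:Z)%R.
Proof.
move=> ha acya n; change (lengths r a n <-> (n%:Z = euler_char a)%R).
have lengthE s : (forall b, b \in s -> is_atom r b) -> a = agg_sum s ->
    euler_char a = ((size s)%:Z)%R.
  by move=> ats aE; rewrite aE (euler_char_atoms hr ats) -?aE //; apply: forest_supp.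
split=> [[s [<- ats aE]] | an]; first by rewrite (lengthE s).
have [s ats aE] := agg_atomic ha.
by exists s; split=> //; move: (lengthE s ats aE); rewrite -an => -[->].
Qed.
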